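(* Let $\nu\ge1$, let $\mathbf{F}_Q\in\mathbb{R}^{\nu\times\nu}$ be symmetric positive semidefinite, $\eta>0$, $\tilde{\mathbf{F}}_Q^{-1}:=(\mathbf{F}_Q+\eta\,\mathrm{Id}_\nu)^{-1}$, and $\underline g\in\mathbb{R}^\nu$. Let $\mathcal H$ be a Hermitian operator on $N$ qubits, $d=2^N$, and let $f_F,f_g>0$ be constants. Define the error-propagation coefficients $a_{kl}:=\sum_{i,j=1}^{\nu}[\tilde{\mathbf{F}}_Q^{-1}]_{ik}^2[\tilde{\mathbf{F}}_Q^{-1}]_{lj}^2\,g_l^2$ and $b_l:=\sum_{k=1}^\nu [\tilde{\mathbf{F}}_Q^{-1}]_{kl}^2$. Suppose each entry $[\mathbf{F}_Q]_{kl}$ is estimated from independent single-shot measurements with single-shot variance $V_{kl}\le f_F$, and each entry $g_l$ from independent single-shot measurements with single-shot variance $W_l\le \mathrm{Spc}[\mathcal H]\,f_g$. Suppose $N_F$ measurements are distributed uniformly over the $\nu^2$ matrix entries ($N_F/\nu^2$ each) and $N_g$ measurements uniformly over the $\nu$ gradient entries ($N_g/\nu$ each), so that the squared error of $\underline v=\tilde{\mathbf{F}}_Q^{-1}\underline g$ is $\epsilon^2=\epsilon_F^2+\epsilon_g^2$ with $\epsilon_F^2=\frac{\nu^2}{N_F}\sum_{k,l}a_{kl}V_{kl}$ and $\epsilon_g^2=\frac{\nu}{N_g}\sum_l b_lW_l$. Given $\epsilon>0$, let $N_F$ and $N_g$ be the numbers of measurements for which $\epsilon_F^2=\epsilon^2/2$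 and $\epsilon_g^2=\epsilon^2/2$ (so the total precision is $\epsilon$ at total cost $N_F+N_g$). Then $$N_F\le 2\,\epsilon^{-2}\nu^4\,\mathrm{Spc}[\tilde{\mathbf{F}}_Q^{-1}]^2\,\lVert g\rVert_\infty^2\,f_F,\qquad N_g\le 2\,\epsilon^{-2}\nu^2\,\mathrm{Spc}[\tilde{\mathbf{F}}_Q^{-1}]\,\mathrm{Spc}[\mathcal H]\,f_g.$$
   Context: For $A\in\mathbb{C}^{m\times m}$, $\mathrm{Spc}[A]:=\lVert A\rVert_F^2/m$ is the average of the squared singular values, where $\lVert\cdot\rVert_F$ is the Hilbert–Schmidt (Frobenius) norm; in particular $\mathrm{Spc}[\mathcal H]=\mathrm{Tr}[\mathcal H^2]/d$. $\lVert g\rVert_\infty=\max_l|g_l|$. In the paper's application $\mathbf{F}_Q$ is the quantum Fisher information matrix of a parametrised quantum state, $\underline g$ is the gradient of the energy $\mathrm{Tr}[\rho(\underline\theta)\mathcal H]$, and $f_F,f_g$ are setup-dependent constants bounding single-shot variances; the error model above is the paper's first-order error-propagation formula for $\epsilon^2=\sum_k\mathrm{Var}[v_k]$. *)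

From HB Require Import structures.
From mathcomp Require Import all_boot all_order all_algebra.
From mathcomp Require Import complex.
Set Implicit Arguments. Unset Strict Implicit. Unset Printing Implicit Defensive.
Import Order.TTheory GRing.Theory Num.Theory.
Local Open Scope ring_scope.

Definition Spc (R : realFieldType) (m : nat) (A : 'M[R]_m) : R :=
  (\sum_(i < m) \sum_(j < m) (A i j) ^+ 2) / m%:R.

Definition sqmod (R : rcfType) (z : R[i]) : R :=
  let: Complex a b := z in a ^+ 2 + b ^+ 2.

(* Spc[H] = ||H||_F^2 / m for a complex m x m matrix (= Tr[H^2]/m for Hermitian H) *)
Definition SpcC (R : rcfType) (m : nat) (H : 'M[R[i]]_m) : R :=
  (\sum_(i < m) \sum_(j < m) sqmod (H i j)) / m%:R.

Definition herm_mx (R : rcfType) (m : nat) (H : 'M[R[i]]_m) : Prop :=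
  forall i j, H j i = Num.conj (H i j).

Definition sym_mx (R : realFieldType) (m : nat) (A : 'M[R]_m) : Prop :=
  A^T = A.

Definition psd (R : realFieldType) (m : nat) (A : 'M[R]_m) : Prop :=
  forall x : 'cV[R]_m, 0 <= (x^T *m A *m x) 0 0.

Definition supnorm (R : realFieldType) (m : nat) (g : 'cV[R]_m) : R :=
  \big[Num.max/0]_(l < m) `|g l 0|.

Definition reg_inv (R : realFieldType) (m : nat) (F : 'M[R]_m) (eta : R) : 'M[R]_m :=
  invmx (F + eta%:M).

Definition coef_a (R : realFieldType) (m : nat) (Fi : 'M[R]_m) (g : 'cV[R]_m)
  (k l : 'I_m) : R :=
  \sum_(i < m) \sum_(j < m) (Fi i k) ^+ 2 * (Fi l j) ^+ 2 * (g l 0) ^+ 2.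

Definition coef_b (R : realFieldType) (m : nat) (Fi : 'M[R]_m) (l : 'I_m) : R :=
  \sum_(k < m) (Fi k l) ^+ 2.

Definition errF (R : realFieldType) (m : nat) (Fi : 'M[R]_m) (g : 'cV[R]_m)
  (V : 'M[R]_m) (NF : R) : R :=
  (m%:R ^+ 2 / NF) * \sum_(k < m) \sum_(l < m) coef_a Fi g k l * V k l.

Definition errg (R : realFieldType) (m : nat) (Fi : 'M[R]_m)
  (W : 'cV[R]_m) (Ng : R) : R :=
  (m%:R / Ng) * \sum_(l < m) coef_b Fi l * W l 0.

From HB Require Import structures.
From mathcomp Require Import all_boot all_order all_algebra.
From mathcomp Require Import complex.
From mathcomp Require Import ring.
Import Order.TTheory GRing.Theory Num.Theory.
Local Open Scope ring_scope.

(* Both error terms are weighted sums of the single-shot variances, with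
   weights controlled by the squared Frobenius norm T = nu Spc[M] of the
   regularised inverse M.  The b_l are the squared column norms of M, so they
   sum to T; and a_kl = b_k b'_l g_l^2 with b'_l the squared row norms, so the
   a_kl sum to at most T^2 ||g||_oo^2.  Solving eps_F^2 = eps^2/2 for N_F gives
   N_F = 2 eps^-2 nu^2 sum a_kl V_kl, and similarly for N_g. *)

Section WeightedSums.

Context {R : realFieldType}.

Lemma ler_wsum (I : Type) (r : seq I) (w x : I -> R) (c : R) :
  (forall i, 0 <= w i) -> (forall i, x i <= c) ->
  \sum_(i <- r) w i * x i <= (\sum_(i <- r) w i) * c.
Proof.
by move=> w_ge0 x_le; rewrite mulr_suml ler_sum // => i _; exact: ler_wpM2l.
Qed.

Lemma ler_wsum2 (I J : Type) (r : seq I) (s : seq J) (w x : I -> J -> R) c :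
  (forall i j, 0 <= w i j) -> (forall i j, x i j <= c) ->
  \sum_(i <- r) \sum_(j <- s) w i j * x i j <=
  (\sum_(i <- r) \sum_(j <- s) w i j) * c.
Proof.
by move=> w_ge0 x_le; rewrite mulr_suml ler_sum // => i _; exact: ler_wsum.
Qed.

End WeightedSums.

Definition sqnorm_mx {R : realFieldType} {m : nat} (A : 'M[R]_m) : R :=
  \sum_(i < m) \sum_(j < m) A i j ^+ 2.

Section RegularisedInverse.

Context {R : realFieldType} {m : nat}.
Implicit Types (A V : 'M[R]_m) (g W : 'cV[R]_m).

Lemma dim_mul_Spc A : (0 < m)%N -> m%:R * Spc A = sqnorm_mx A.
Proof. by move=> m_gt0; rewrite /Spc mulrC divfK // pnatr_eq0 -lt0n. Qed.

Lemma sqnorm_mx_tr A : sqnorm_mx A^T = sqnorm_mx A.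
Proof.
rewrite /sqnorm_mx exchange_big; apply: eq_bigr => i _.
by apply: eq_bigr => j _; rewrite mxE.
Qed.

Lemma sqr_le_supnorm g l : g l 0 ^+ 2 <= supnorm g ^+ 2.
Proof.
have l_le : `|g l 0| <= supnorm g by exact: le_bigmax.
by rewrite -real_normK ?num_real // lerXn2r ?nnegrE ?(le_trans _ l_le).
Qed.

Lemma coef_b_ge0 A l : 0 <= coef_b A l.
Proof. by apply: sumr_ge0 => k _; exact: sqr_ge0. Qed.

Lemma sum_coef_b A : \sum_(l < m) coef_b A l = sqnorm_mx A.
Proof. by rewrite /sqnorm_mx exchange_big. Qed.

Lemma coef_aE A g k l : coef_a A g k l = coef_b A k * coef_b A^T l * g l 0 ^+ 2.
Proof.
rewrite /coef_a /coef_b big_distrlr mulr_suml; apply: eq_bigr => i _.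
by rewrite mulr_suml; apply: eq_bigr => j _; rewrite mxE.
Qed.

Lemma sum_coef_a_le A g V c : (forall k l, 0 <= V k l <= c) ->
  \sum_(k < m) \sum_(l < m) coef_a A g k l * V k l <=
  sqnorm_mx A ^+ 2 * (supnorm g ^+ 2 * c).
Proof.
move=> V_bd.
have -> : sqnorm_mx A ^+ 2 =
    \sum_(k < m) \sum_(l < m) coef_b A k * coef_b A^T l.
  by rewrite expr2 -{1}sum_coef_b -(sqnorm_mx_tr A) -sum_coef_b big_distrlr.
under eq_bigr => k _ do under eq_bigr => l _ do rewrite coef_aE -mulrA.
apply: ler_wsum2 => [k l|k l]; first by rewrite mulr_ge0 ?coef_b_ge0.
by case/andP: (V_bd k l) => V_ge0 V_le; rewrite ler_pM ?sqr_ge0 ?sqr_le_supnorm.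
Qed.

Lemma sum_coef_b_le A W c : (forall l, W l 0 <= c) ->
  \sum_(l < m) coef_b A l * W l 0 <= sqnorm_mx A * c.
Proof.
by move=> W_le; rewrite -sum_coef_b ler_wsum // => l; exact: coef_b_ge0.
Qed.

End RegularisedInverse.

Lemma budget_solve {R : fieldType} {c s e N : R} :
  (2 : R) != 0 -> e != 0 -> N != 0 ->
  c / N * s = e ^+ 2 / 2 -> N = 2 * e ^- 2 * c * s.
Proof.
move=> two_neq0 e_neq0 N_neq0 budget.
have cs : c * s = e ^+ 2 / 2 * N by rewrite -budget; field.
by rewrite -mulrA cs; field; rewrite two_neq0.
Qed.

Theorem theorem1 (R : rcfType) (nu N : nat) (F : 'M[R]_nu) (eta : R)
  (g : 'cV[R]_nu) (H : 'M[R[i]]_(2 ^ N)) (fF fg : R)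
  (V : 'M[R]_nu) (W : 'cV[R]_nu) (eps NF Ng : R) :
  (0 < nu)%N ->
  sym_mx F -> psd F -> 0 < eta ->
  herm_mx H -> 0 < fF -> 0 < fg ->
  (forall k l, 0 <= V k l <= fF) ->
  (forall l, 0 <= W l 0 <= SpcC H * fg) ->
  0 < eps -> 0 < NF -> 0 < Ng ->
  errF (reg_inv F eta) g V NF = eps ^+ 2 / 2 ->
  errg (reg_inv F eta) W Ng = eps ^+ 2 / 2 ->
  NF <= 2 * eps ^- 2 * nu%:R ^+ 4 * (Spc (reg_inv F eta)) ^+ 2
          * (supnorm g) ^+ 2 * fF /\
  Ng <= 2 * eps ^- 2 * nu%:R ^+ 2 * Spc (reg_inv F eta) * SpcC H * fg.
Proof.
move=> nu_gt0 _ _ _ _ _ _ V_bd W_bd eps_gt0 NF_gt0 Ng_gt0 errF_eq errg_eq.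
set M := reg_inv F eta.
have two_neq0 : (2 : R) != 0 by rewrite pnatr_eq0.
have [eps_neq0 NF_neq0 Ng_neq0] :=
  And3 (lt0r_neq0 eps_gt0) (lt0r_neq0 NF_gt0) (lt0r_neq0 Ng_gt0).
have scale_ge0 (c : R) : 0 <= c -> 0 <= 2 * eps ^- 2 * c.
  by move=> c_ge0; rewrite !mulr_ge0 ?invr_ge0 ?sqr_ge0.
have A_le := sum_coef_a_le M g _ _ V_bd.
have B_le : \sum_(l < nu) coef_b M l * W l 0 <= sqnorm_mx M * (SpcC H * fg).
  by apply: sum_coef_b_le => l; case/andP: (W_bd l).
rewrite -(dim_mul_Spc M nu_gt0) in A_le B_le.
split.
- rewrite (budget_solve two_neq0 eps_neq0 NF_neq0 errF_eq).
  apply: le_trans (ler_wpM2l (scale_ge0 _ (exprn_ge0 _ (ler0n _ _))) A_le) _.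
  by rewrite le_eqVlt; apply/orP; left; apply/eqP; ring.
- rewrite (budget_solve two_neq0 eps_neq0 Ng_neq0 errg_eq).
  apply: le_trans (ler_wpM2l (scale_ge0 _ (ler0n _ _)) B_le) _.
  by rewrite le_eqVlt; apply/orP; left; apply/eqP; ring.
Qed.
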